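(* Let $\mathcal G$ be a finite simplicial graph with a base vertex $v$ and a vertex $w\neq v$. Let $\mathcal L$ be the wedge of four copies of $\mathcal G$ glued along $v$. Let $X_{\mathcal L}$ be the universal cover of the Salvetti complex $S_{\mathcal L}$, and let $\Gamma_{\mathcal L}$ and $BB_{\mathcal L}$ be the right-angled Artin group and Bestvina–Brady group of $\mathcal L$, viewed as discrete subgroups of $G=\mathrm{Aut}(X_{\mathcal L})$ via the deck transformation action. Then $\mathrm{Comm}_G(BB_{\mathcal L})\cap\mathrm{Comm}_G(\Gamma_{\mathcal L})$ is not discrete in $G$. In particular, $\mathrm{Comm}_G(BB_{\mathcal L})$ is not discrete.
   Context: For a finite simplicial graph $\mathcal L$, the right-angled Artin group $\Gamma_{\mathcal L}$ has one generator per vertex and relations that generators of adjacent vertices commute. Its Salvetti complex $S_{\mathcal L}$ is the cube complex with one vertex, one oriented edge-loop per vertex of $\mathcal L$, and a $k$-torus (a $k$-cube with opposite faces identified) for each complete subgraph on $k$ vertices; $\pi_1 S_{\mathcal L}=\Gamma_{\mathcal L}$ and its universal cover $X_{\mathcal L}$ is a CAT(0) cube complex. The Bestvina–Brady group $BB_{\mathcal L}$ is the kernel of the homomorphism $\Gamma_{\mathcal L}\to\mathbb Z$ sending every standard generator to $1$. $\mathrm{Aut}(X_{\mathcal L})$ is the group of cubical automorphisms of $X_{\mathcal L}$ with the compact-open topology. $\mathrm{Comm}_G(A)=\{g\in G: gAg^{-1}\cap A$ has finite index in both $A$ and $gAg^{-1}\}$. *)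

From Stdlib Require List.
From mathcomp Require Import all_boot.
Set Implicit Arguments. Unset Strict Implicit. Unset Printing Implicit Defensive.

Section RAAG.
Variables (V : finType) (adj : rel V).

(* A letter is a generator (b = false) or its inverse (b = true). *)
Definition letter := (V * bool)%type.
Definition word := seq letter.

(* The congruence on words defining the right-angled Artin group Gamma_L:
   generated by free cancellation and commutation of adjacent generators. *)
Inductive wequiv : word -> word -> Prop :=
| weq_refl x : wequiv x x
| weq_sym x y : wequiv x y -> wequiv y x
| weq_trans x y z : wequiv x y -> wequiv y z -> wequiv x z
| weq_cancel (u w : word) (s : V) (b : bool) :
    wequiv (u ++ (s, b) :: (s, ~~ b) :: w) (u ++ w)
| weq_comm (u w : word) (s t : V) (b c : bool) : adj s t ->
    wequiv (u ++ (s, b) :: (t, c) :: w) (u ++ (t, c) :: (s, b) :: w).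

(* Vertices of X_L = elements of Gamma_L, represented by words modulo wequiv.
   Cubes of X_L: for g in Gamma_L and a clique S of L, the cube g.<S> has
   vertex set { g * prod(T) : T subset of S }. *)
Definition clique (S : seq V) : Prop :=
  uniq S /\ (forall s t, s \in S -> t \in S -> s != t -> adj s t).

Definition in_cube (g : word) (S : seq V) (x : word) : Prop :=
  exists T : seq V, subseq T S /\ wequiv x (g ++ map (fun s => (s, false)) T).

Definition is_cube (C : word -> Prop) : Prop :=
  exists g S, clique S /\ forall x, C x <-> in_cube g S x.

Definition img (f : word -> word) (C : word -> Prop) : word -> Prop :=
  fun y => exists x, C x /\ wequiv (f x) y.

Definition maps_cubes (f : word -> word) : Prop :=
  forall g S, clique S -> is_cube (img f (in_cube g S)).

(* Cubical automorphisms of X_L, given by their action on vertices: bijections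
   of the vertex set (words mod wequiv) which, together with their inverse,
   send vertex sets of cubes to vertex sets of cubes. *)
Definition is_inverse (f finv : word -> word) : Prop :=
  (forall x y, wequiv x y -> wequiv (finv x) (finv y)) /\
  (forall x, wequiv (f (finv x)) x) /\ (forall x, wequiv (finv (f x)) x) /\
  maps_cubes finv.

Definition isAut (f : word -> word) : Prop :=
  (forall x y, wequiv x y -> wequiv (f x) (f y)) /\ maps_cubes f /\
  exists finv, is_inverse f finv.

(* subgroups of Aut(X_L) are predicates on vertex maps *)
Definition apred := (word -> word) -> Prop.

(* Gamma_L acting by deck transformations (left multiplication). *)
Definition Gamma : apred := fun h =>
  isAut h /\ exists g : word, forall x, wequiv (h x) (g ++ x).

(* Bestvina--Brady group: kernel of the map sending each generator to 1,
   i.e. exponent sum zero. *)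
Definition expsum0 (g : word) : bool :=
  count (fun l : letter => ~~ l.2) g == count (fun l : letter => l.2) g.

Definition BB : apred := fun h =>
  isAut h /\ exists g : word, expsum0 g /\ forall x, wequiv (h x) (g ++ x).

Definition fin_index (K A : apred) : Prop :=
  exists cs : seq (word -> word), (forall c, List.In c cs -> A c) /\
  forall a, A a -> exists c, List.In c cs /\
    exists k, K k /\ forall x, wequiv (a x) (c (k x)).

Definition conjg (g ginv : word -> word) (A : apred) : apred := fun h =>
  isAut h /\ exists a, A a /\ forall x, wequiv (h x) (g (a (ginv x))).

Definition inter (A B : apred) : apred := fun h => A h /\ B h.

Definition Comm (A : apred) : apred := fun g =>
  isAut g /\ exists ginv, is_inverse g ginv /\
    fin_index (inter A (conjg g ginv A)) A /\
    fin_index (inter A (conjg g ginv A)) (conjg g ginv A).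

(* H is not discrete in Aut(X_L) (compact-open topology = topology of
   pointwise convergence on vertices, X_L locally finite): every basic
   neighbourhood of the identity, i.e. the pointwise stabiliser of a finite
   set of vertices, contains a non-identity element of the subgroup H. *)
Definition not_discrete (H : apred) : Prop :=
  forall F : seq word, exists h, H h /\
    (forall x, List.In x F -> wequiv (h x) x) /\
    ~ (forall x, wequiv (h x) x).

End RAAG.

(* Wedge of four copies of a graph (T, e) glued along the vertex v:
   None is the common vertex v, Some (i, x) is vertex x <> v of copy i. *)
Section Wedge.
Variables (T : finType) (e : rel T) (v : T).

Definition wedge_vertex := option ('I_4 * {x : T | x != v})%type.

Definition wedge_adj : rel wedge_vertex := fun a b =>
  match a, b with
  | None, None => false
  | None, Some (_, y) => e v (val y)
  | Some (_, x), None => e (val x) v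
  | Some (i, x), Some (j, y) => (i == j) && e (val x) (val y)
  end.
End Wedge.

From Stdlib Require Import ZArith Lia.
From Stdlib Require List.
From mathcomp Require Import all_boot fingroup perm zify.
(* Imported after fingroup, so that [conjg] is the conjugation of Defs. *)
From Pilot Require Import Defs.
Set Implicit Arguments. Unset Strict Implicit. Unset Printing Implicit Defensive.

(* Let H be a set of vertices of L and sigma an involutive automorphism of L
   fixing the star of H pointwise.  Read a word from left to right, keeping
   track of its running exponent sum over H (its height), and apply sigma to
   every letter read at a height congruent to k mod n.  As sigma fixes the
   star of H, this respects the relations of Gamma_L and maps cubes to cubes,
   so it is an involutive automorphism of X_L.  It conjugates left
   multiplication by g to left multiplication by the twist of g whenever the
   height of g is divisible by n, so it normalises the finite-index subgroups
   of Gamma_L and BB_L of height divisible by n, and commensurates both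
   groups.  For n = 2M + 2 and k = M + 1 it fixes every word of length at
   most M, but it is not the identity when sigma is not.  For the wedge, H is
   the first copy of G and sigma swaps the third and fourth copies. *)

Lemma exists_size_bound (T : Type) (F : seq (seq T)) :
  exists M, forall x, List.In x F -> (size x <= M)%N.
Proof.
elim: F => [|y F [M size_M]]; first by exists 0.
exists (maxn (size y) M) => x /= [<- | /size_M x_M]; first exact: leq_maxl.
exact: leq_trans x_M (leq_maxr _ _).
Qed.

Section RAAG.
Variables (V : finType) (adj : rel V).
Local Notation word := (word V).
Local Notation wq := (wequiv adj).

Lemma wequiv_catl g x y : wq x y -> wq (g ++ x) (g ++ y).
Proof.
elim=> {x y} [x|x y _ IH|x y z _ IH1 _ IH2|u w s b|u w s t b c st].
- exact: weq_refl.
- exact: weq_sym.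
- exact: weq_trans IH1 IH2.
- by rewrite !catA; apply: weq_cancel.
- by rewrite !catA; apply: weq_comm.
Qed.

Definition flip (l : letter V) : letter V := (l.1, ~~ l.2).
Definition winv (g : word) : word := rev (map flip g).

Lemma winvK : involutive winv.
Proof.
move=> g; rewrite /winv map_rev revK -map_comp map_id_in // => -[s b] _.
by rewrite /flip /= negbK.
Qed.

Lemma winv_cons l g : winv (l :: g) = winv g ++ [:: flip l].
Proof. by rewrite /winv /= rev_cons cats1. Qed.

Lemma wequiv_cat_winv g x : wq (g ++ winv g ++ x) x.
Proof.
elim: g x => [|[s b] g IH] x /=; first exact: weq_refl.
rewrite winv_cons -catA /=.
apply: weq_trans (weq_cancel adj [::] x s b).
exact: (wequiv_catl [:: (s, b)] (IH _)).
Qed.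

Definition lmul (g : word) : word -> word := cat g.

Lemma maps_cubes_comp f g : (forall x y, wq x y -> wq (f x) (f y)) ->
  maps_cubes adj f -> maps_cubes adj g -> maps_cubes adj (f \o g).
Proof.
move=> f_wq f_cubes g_cubes g0 S S_clique.
have [g1 [S1 [S1_clique gC]]] := g_cubes g0 S S_clique.
have [g2 [S2 [S2_clique fC]]] := f_cubes g1 S1 S1_clique.
exists g2, S2; split=> // y; rewrite -fC; split.
- move=> [x [Cx fgx]]; exists (g x); split=> //; apply/gC.
  by exists x; split=> //; apply: weq_refl.
- move=> [z [Cz fz]]; have [x [Cx gx]] := proj2 (gC z) Cz.
  by exists x; split=> //; apply: weq_trans fz; apply: f_wq.
Qed.

Lemma isAut_comp f g : isAut adj f -> isAut adj g -> isAut adj (f \o g).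
Proof.
move=> [f_wq [f_cubes [fi [fi_wq [ffi [fif fi_cubes]]]]]].
move=> [g_wq [g_cubes [gi [gi_wq [ggi [gig gi_cubes]]]]]].
split; first by move=> x y xy /=; apply: f_wq; apply: g_wq.
split; first exact: maps_cubes_comp.
exists (gi \o fi); split; first by move=> x y xy /=; apply: gi_wq; apply: fi_wq.
split; first by move=> x /=; apply: weq_trans (ffi x); apply: f_wq.
split; first by move=> x /=; apply: weq_trans (gig x); apply: gi_wq.
exact: maps_cubes_comp.
Qed.

Lemma isAut_of_involution f : is_inverse adj f f -> isAut adj f.
Proof. by move=> f_inv; case: (f_inv) => f_wq [_ [_ f_cubes]]; do 2?split=> //; exists f. Qed.

Lemma maps_cubes_lmul g : maps_cubes adj (lmul g).
Proof.
move=> g0 S S_clique; exists (g ++ g0), S; split=> // y; split.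
- move=> [x [[T0 [T0S x_cube]] xy]]; exists T0; split=> //.
  apply: weq_trans (weq_sym xy) _; rewrite -catA; exact: wequiv_catl.
- move=> [T0 [T0S y_cube]]; exists (g0 ++ map (fun s => (s, false)) T0); split.
    by exists T0; split=> //; apply: weq_refl.
  by rewrite /lmul catA; apply: weq_sym.
Qed.

Lemma isAut_lmul g : isAut adj (lmul g).
Proof.
split; first by move=> x y; apply: wequiv_catl.
split; first exact: maps_cubes_lmul.
exists (lmul (winv g)); split; first by move=> x y; apply: wequiv_catl.
split; first exact: wequiv_cat_winv.
split; last exact: maps_cubes_lmul.
by move=> x; have := wequiv_cat_winv (winv g) x; rewrite winvK.
Qed.

Lemma fin_index_sub (K K' A : apred V) :
  (forall k, K k -> K' k) -> fin_index adj K A -> fin_index adj K' A.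
Proof.
move=> KK' [cs [csA cosets]]; exists cs; split=> // a /cosets [c [cc [k [Kk ack]]]].
by exists c; split=> //; exists k; split=> //; apply: KK'.
Qed.

Section Commensurator.
Variables (f : word -> word) (A K : apred V).
Hypothesis f_inv : is_inverse adj f f.
Hypothesis A_aut : forall a, A a -> isAut adj a.
Hypothesis K_sub : forall k, K k -> A k.
Hypothesis K_conj : forall k, K k -> K (f \o k \o f).
Hypothesis K_fin : fin_index adj K A.

Let f_wq x y : wq x y -> wq (f x) (f y).
Proof. by case: f_inv => f_wq _; apply: f_wq. Qed.

Let ffK x : wq (f (f x)) x.
Proof. by case: f_inv => _ []. Qed.

Lemma K_sub_conjg k : K k -> conjg adj f f A k.
Proof.
move=> Kk; have k_aut := A_aut (K_sub Kk); have [k_wq _] := k_aut.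
split=> //; exists (f \o k \o f); split; first exact: K_sub (K_conj Kk).
move=> x /=; apply: weq_sym; apply: weq_trans (ffK _) _; apply: k_wq; exact: ffK.
Qed.

Lemma fin_index_conjg : fin_index adj K (conjg adj f f A).
Proof.
have f_aut := isAut_of_involution f_inv.
have [cs [csA cosets]] := K_fin.
exists (List.map (fun c => f \o c \o f) cs); split.
  move=> _ /List.in_map_iff [c [<- cc]]; split.
    by apply: isAut_comp => //; apply: isAut_comp => //; apply/A_aut/csA.
  by exists c; split; [exact: csA | move=> x; exact: weq_refl].
move=> h [_ [a [Aa ha]]]; have [c [cc [k [Kk ack]]]] := cosets a Aa.
exists (f \o c \o f); split; first by apply/List.in_map_iff; exists c.
exists (f \o k \o f); split; first exact: K_conj.
move=> x /=; apply: weq_trans (ha x) _; apply: f_wq.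
have [c_wq _] := A_aut (csA _ cc).
apply: weq_trans (ack _) _; apply: c_wq; apply: weq_sym; exact: ffK.
Qed.

Lemma Comm_of_involution : Comm adj A f.
Proof.
have K_inter k : K k -> inter A (conjg adj f f A) k.
  by move=> Kk; split; [exact: K_sub | exact: K_sub_conjg].
split; first exact: isAut_of_involution.
exists f; split=> //.
by split; apply: fin_index_sub K_inter _; [exact: K_fin | exact: fin_index_conjg].
Qed.

End Commensurator.

Definition lexp (P : pred V) (l : letter V) : Z :=
  if P l.1 then (if l.2 then -1 else 1)%Z else 0%Z.

Definition expsum (P : pred V) (w : word) : Z := foldr (fun l z => lexp P l + z)%Z 0%Z w.

Lemma lexp_flip P l : lexp P (flip l) = (- lexp P l)%Z.
Proof. by case: l => s []; rewrite /lexp /=; case: (P s). Qed.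

Lemma lexp_bound P l : (-1 <= lexp P l <= 1)%Z.
Proof. by case: l => s []; rewrite /lexp /=; case: (P s). Qed.

Lemma expsum_cat P u w : expsum P (u ++ w) = (expsum P u + expsum P w)%Z.
Proof. by elim: u => [|l u IH] //=; rewrite IH Z.add_assoc. Qed.

Lemma expsum_winv P g : expsum P (winv g) = (- expsum P g)%Z.
Proof. by elim: g => [|l g IH] //; rewrite winv_cons expsum_cat IH /= lexp_flip; lia. Qed.

Lemma expsum_nseq P m l : expsum P (nseq m l) = (Z.of_nat m * lexp P l)%Z.
Proof. by elim: m => [|m IH] //; rewrite Nat2Z.inj_succ /= IH; nia. Qed.

Lemma expsum_wequiv P x y : wq x y -> expsum P x = expsum P y.
Proof.
elim=> {x y} [//|x y _ -> //|x y z _ -> _ -> //|u w s b|u w s t b c _];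
  rewrite !expsum_cat /=; last lia.
by have := lexp_flip P (s, b); rewrite /flip /=; lia.
Qed.

Lemma expsumT_count g : expsum predT g =
  (Z.of_nat (count (fun l : letter V => ~~ l.2) g) -
   Z.of_nat (count (fun l : letter V => l.2) g))%Z.
Proof.
elim: g => [|[s b] g IH] //=; rewrite IH /lexp [predT s]/=.
by case: b; cbn [negb nat_of_bool fst snd]; lia.
Qed.

Lemma expsum0P g : reflect (expsum predT g = 0%Z) (expsum0 g).
Proof. by rewrite /expsum0 expsumT_count; apply: (iffP eqP) => ?; lia. Qed.

Definition lmul_group (W : word -> Prop) : apred V := fun h =>
  isAut adj h /\ exists g, W g /\ forall x, wq (h x) (g ++ x).

Lemma lmul_group_lmul (W : word -> Prop) g : W g -> lmul_group W (lmul g).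
Proof. by move=> Wg; split; [exact: isAut_lmul | exists g; split=> // x; exact: weq_refl]. Qed.

Definition wpow (r : word) (j : nat) : word := iter j (cat r) [::].

Lemma expsum_wpow P r j : expsum P (wpow r j) = (Z.of_nat j * expsum P r)%Z.
Proof. by elim: j => [|j IH] //; rewrite Nat2Z.inj_succ /= expsum_cat IH; nia. Qed.

Section FiniteIndex.
Variables (W : word -> Prop) (A : apred V) (P : pred V) (n : Z) (r : word).
Hypothesis A_lmul : forall h, A h <-> lmul_group W h.
Hypothesis W_nil : W [::].
Hypothesis W_cat : forall a b, W a -> W b -> W (a ++ b).
Hypothesis W_winv : forall a, W a -> W (winv a).
Hypothesis W_r : W r.
Hypothesis expsum_r : expsum P r = 1%Z.
Hypothesis n_gt0 : (0 < n)%Z.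

Lemma W_wpow j : W (wpow r j).
Proof. by elim: j => [|j IH] //=; apply: W_cat. Qed.

Lemma fin_index_expsum_mod :
  fin_index adj (lmul_group (fun g => W g /\ (expsum P g mod n = 0)%Z)) A.
Proof.
exists (List.map (fun j => lmul (wpow r j)) (List.seq 0 (Z.to_nat n))); split.
  by move=> _ /List.in_map_iff [j [<- _]]; apply/A_lmul/lmul_group_lmul/W_wpow.
move=> a /A_lmul [_ [g [Wg ag]]].
have g_mod := Z.mod_pos_bound (expsum P g) n n_gt0.
set j := Z.to_nat (expsum P g mod n).
exists (lmul (wpow r j)); split.
  by apply/List.in_map_iff; exists j; split=> //; apply/List.in_seq; lia.
exists (lmul (winv (wpow r j) ++ g)); split.
  apply: lmul_group_lmul; split; first by apply: W_cat => //; apply/W_winv/W_wpow.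
  rewrite expsum_cat expsum_winv expsum_wpow expsum_r Z2Nat.id; last lia.
  have -> : (- (expsum P g mod n * 1) + expsum P g = (expsum P g / n) * n)%Z.
    by have := Z.div_mod (expsum P g) n; lia.
  exact: Z_mod_mult.
move=> x; apply: weq_trans (ag x) _; rewrite /lmul -catA.
apply: weq_sym; exact: wequiv_cat_winv.
Qed.

End FiniteIndex.

End RAAG.

Section Twist.
Variables (V : finType) (adj : rel V) (sigma : V -> V) (H : pred V).
Hypothesis adj_sym : symmetric adj.
Hypothesis sigmaK : involutive sigma.
Hypothesis adj_sigma : forall s t, adj (sigma s) (sigma t) = adj s t.
Hypothesis sigma_star : forall s t, H s -> s = t \/ adj s t -> sigma t = t.
Local Notation word := (word V).
Local Notation wq := (wequiv adj).
Local Notation height := (expsum H).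

Lemma sigma_fixH s : H s -> sigma s = s.
Proof. by move=> Hs; apply: sigma_star Hs (or_introl erefl). Qed.

Lemma H_sigma s : H (sigma s) = H s.
Proof.
apply/idP/idP => [Hss | Hs]; last by rewrite sigma_fixH.
by have := sigma_fixH Hss; rewrite sigmaK => ->.
Qed.

Section Modulus.
Variables (n k : Z).

Definition twist_at (q : Z) (s : V) : V := if (q mod n =? k)%Z then sigma s else s.

Fixpoint twist (q : Z) (w : word) : word :=
  if w is l :: w' then (twist_at q l.1, l.2) :: twist (q + lexp H l) w' else [::].

Lemma twist_atK q : involutive (twist_at q).
Proof. by move=> s; rewrite /twist_at; case: (q mod n =? k)%Z. Qed.

Lemma adj_twist_at q s t : adj (twist_at q s) (twist_at q t) = adj s t.
Proof. by rewrite /twist_at; case: (q mod n =? k)%Z. Qed.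

Lemma lexp_twist_at P q s b : (forall s, P (sigma s) = P s) ->
  lexp P (twist_at q s, b) = lexp P (s, b).
Proof.
by move=> P_sigma; rewrite /lexp /twist_at /=; case: (q mod n =? k)%Z; rewrite ?P_sigma.
Qed.

(* A letter of H changes the height, but every letter commuting with it is
   fixed by sigma, so its twist does not depend on that height. *)
Lemma twist_at_shift q s t b : s = t \/ adj s t ->
  twist_at (q + lexp H (s, b)) t = twist_at q t.
Proof.
move=> st; rewrite /lexp /=; case Hs: (H s); last by rewrite Z.add_0_r.
by rewrite /twist_at (sigma_star Hs st) !if_same.
Qed.

Lemma twist_cat q u w : twist q (u ++ w) = twist q u ++ twist (q + height u) w.
Proof.
elim: u q => [|l u IH] q /=; first by rewrite Z.add_0_r.
by rewrite IH Z.add_assoc.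
Qed.

Lemma twistK q : involutive (twist q).
Proof.
move=> w; elim: w q => [|[s b] w IH] q //=.
by rewrite twist_atK lexp_twist_at ?IH //; exact: H_sigma.
Qed.

Lemma expsum_twist P q w : (forall s, P (sigma s) = P s) ->
  expsum P (twist q w) = expsum P w.
Proof. by move=> P_sigma; elim: w q => [|[s b] w IH] q //=; rewrite IH lexp_twist_at. Qed.

Lemma twist_wequiv x y : wq x y -> forall q, wq (twist q x) (twist q y).
Proof.
elim=> {x y} [x|x y _ IH|x y z _ IH1 _ IH2|u w s b|u w s t b c st] q.
- exact: weq_refl.
- exact/weq_sym/IH.
- exact: weq_trans (IH1 q) (IH2 q).
- rewrite !twist_cat /= twist_at_shift; last by left.
  have -> : (q + height u + lexp H (s, b) + lexp H (s, ~~ b) = q + height u)%Z.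
    by have := lexp_flip H (s, b); rewrite /flip /=; lia.
  exact: weq_cancel.
- have ts : adj t s by rewrite adj_sym.
  rewrite !twist_cat /= (twist_at_shift _ _ (or_intror st)).
  rewrite (twist_at_shift _ _ (or_intror ts)).
  rewrite -!Z.add_assoc (Z.add_comm (lexp H (t, c))).
  by apply: weq_comm; rewrite adj_twist_at.
Qed.

Lemma twist_clique q S : clique adj S ->
  twist q (map (fun s => (s, false)) S) = map (fun s => (s, false)) (map (twist_at q) S).
Proof.
elim: S q => [|s S IH] q //= [/andP [sS S_uniq] S_adj].
rewrite IH; last first.
  by split=> // a c aS cS; apply: S_adj; rewrite inE ?aS ?cS orbT.
congr (_ :: _); congr (map _ _); apply/eq_in_map => t tS.
apply: twist_at_shift; right; apply: S_adj; rewrite ?inE ?eqxx ?tS ?orbT //.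
by apply: contraNneq sS => ->.
Qed.

Lemma clique_twist_at q S : clique adj S -> clique adj (map (twist_at q) S).
Proof.
move=> [S_uniq S_adj]; split; first by rewrite map_inj_uniq //; exact: can_inj (twist_atK q).
move=> a c /mapP [s sS ->] /mapP [t tS ->] st; rewrite adj_twist_at; apply: S_adj => //.
by apply: contraNneq st => ->.
Qed.

Lemma maps_cubes_twist q : maps_cubes adj (twist q).
Proof.
move=> g S S_clique; set tw := twist_at (q + height g).
have [S_uniq S_adj] := S_clique.
have sub_clique T0 : subseq T0 S -> clique adj T0.
  move=> T0S; split; first exact: subseq_uniq T0S S_uniq.
  by move=> s t sT tT; apply: S_adj; apply: (mem_subseq T0S).
exists (twist q g), (map tw S); split; first exact: clique_twist_at.
move=> y; split.
- move=> [x [[T0 [T0S x_cube]] xy]]; exists (map tw T0); split; first exact: map_subseq.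
  apply: weq_trans (weq_sym xy) _; apply: weq_trans (twist_wequiv x_cube q) _.
  by rewrite twist_cat twist_clique; [exact: weq_refl | exact: sub_clique].
- move=> [T1 [T1S y_cube]]; set T0 := map tw T1.
  have T0S : subseq T0 S by have := map_subseq tw T1S; rewrite (mapK (twist_atK _)).
  exists (g ++ map (fun s => (s, false)) T0); split.
    by exists T0; split=> //; apply: weq_refl.
  rewrite twist_cat twist_clique; last exact: sub_clique.
  by rewrite /T0 (mapK (twist_atK _)); apply: weq_sym.
Qed.

Lemma is_inverse_twist q : is_inverse adj (twist q) (twist q).
Proof.
split; first by move=> x y xy; apply: twist_wequiv.
split; first by move=> x; rewrite twistK; apply: weq_refl.
split; first by move=> x; rewrite twistK; apply: weq_refl.
exact: maps_cubes_twist.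
Qed.

Lemma twist_mod q q' w : (q mod n = q' mod n)%Z -> twist q w = twist q' w.
Proof.
elim: w q q' => [|l w IH] q q' qq' //=.
rewrite /twist_at qq'; congr (_ :: _); apply: IH.
by rewrite Zplus_mod qq' -Zplus_mod.
Qed.

Lemma twist_cat_mod0 g y : (height g mod n = 0)%Z ->
  twist 0 (g ++ y) = twist 0 g ++ twist 0 y.
Proof.
by move=> g_mod; rewrite twist_cat; congr (_ ++ _); apply: twist_mod; rewrite g_mod Zmod_0_l.
Qed.

Lemma Comm_twist (W : word -> Prop) (A : apred V) (r : word) :
  (0 < n)%Z -> (forall h, A h <-> lmul_group adj W h) ->
  W [::] -> (forall a b, W a -> W b -> W (a ++ b)) -> (forall a, W a -> W (winv a)) ->
  (forall a, W a -> W (twist 0 a)) -> W r -> height r = 1%Z ->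
  Comm adj A (twist 0).
Proof.
move=> n_gt0 A_lmul W_nil W_cat W_winv W_twist W_r height_r.
apply: (Comm_of_involution (K := lmul_group adj (fun g => W g /\ (height g mod n = 0)%Z))).
- exact: is_inverse_twist.
- by move=> a /A_lmul [].
- by move=> h [h_aut [g [[Wg _] hg]]]; apply/A_lmul; split=> //; exists g.
- move=> h [h_aut [g [[Wg g_mod] hg]]]; have tw_aut := isAut_of_involution (is_inverse_twist 0).
  split; first by do 2!apply: isAut_comp => //.
  exists (twist 0 g); split.
    by split; [exact: W_twist | rewrite expsum_twist //; exact: H_sigma].
  move=> x /=; rewrite -{2}(twistK 0 x) -twist_cat_mod0 //.
  exact: twist_wequiv.
- exact: (fin_index_expsum_mod A_lmul W_nil W_cat W_winv W_r height_r n_gt0).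
Qed.

End Modulus.

Lemma twist_at_id_low (M q : Z) s : (Z.abs q <= M)%Z -> twist_at (2 * M + 2) (M + 1) q s = s.
Proof.
move=> qM; rewrite /twist_at; case: Z.eqb_spec => // q_mod; exfalso.
have [q_ge0 | q_lt0] := Z.le_gt_cases 0 q.
- by rewrite Z.mod_small in q_mod; lia.
- by rewrite -(Z.mod_add q 1) ?Z.mod_small in q_mod; lia.
Qed.

Lemma twist_id_short (M q : Z) x : (Z.abs q + Z.of_nat (size x) <= M)%Z ->
  twist (2 * M + 2) (M + 1) q x = x.
Proof.
elim: x q => [|[s b] x IH] q //= qx; have lb := lexp_bound H (s, b).
by rewrite twist_at_id_low ?IH //; lia.
Qed.

Lemma twist_nseq n k q m u w : H u ->
  twist n k q (nseq m (u, false) ++ w) = nseq m (u, false) ++ twist n k (q + Z.of_nat m) w.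
Proof.
move=> Hu; elim: m q => [|m IH] q; first by rewrite /= Z.add_0_r.
rewrite [LHS]/= IH /twist_at sigma_fixH // if_same /lexp /= Hu.
by congr (_ :: _ ++ twist _ _ _ _); lia.
Qed.

Lemma twist_not_id M u s : H u -> sigma s != s ->
  ~ (forall x, wq (twist (2 * Z.of_nat M + 2) (Z.of_nat M + 1) 0 x) x).
Proof.
move=> Hu s_moved fix_all.
have us : u != s by apply: contraNneq s_moved => <-; rewrite sigma_fixH.
have := expsum_wequiv (pred1 s) (fix_all (nseq M.+1 (u, false) ++ [:: (s, false)])).
rewrite twist_nseq // !expsum_cat expsum_nseq /= /twist_at.
have -> : ((0 + Z.of_nat M.+1) mod (2 * Z.of_nat M + 2) =? Z.of_nat M + 1)%Z.
  by apply/Z.eqb_eq; rewrite Z.mod_small; lia.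
by rewrite /lexp /= (negbTE us) eqxx (negbTE s_moved).
Qed.

Theorem Comm_BB_Gamma_not_discrete u s (F : seq word) : H u -> sigma s != s ->
  exists h, Comm adj (BB adj) h /\ Comm adj (Gamma adj) h /\
    (forall x, List.In x F -> wq (h x) x) /\ ~ (forall x, wq (h x) x).
Proof.
move=> Hu s_moved; have [M size_M] := exists_size_bound F.
have Hs : ~~ H s by apply: contra s_moved => /sigma_fixH ->.
set n := (2 * Z.of_nat M + 2)%Z; set k := (Z.of_nat M + 1)%Z.
have n_gt0 : (0 < n)%Z by rewrite /n; lia.
exists (twist n k 0); split; [|split; [|split]].
- (* u s^-1 lies in BB_L and has height 1. *)
  apply: (Comm_twist (W := fun g => expsum0 g) (r := [:: (u, false); (s, true)])) => //.
  + by move=> a b /expsum0P ea /expsum0P eb; apply/expsum0P; rewrite expsum_cat ea eb.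
  + by move=> a /expsum0P ea; apply/expsum0P; rewrite expsum_winv ea.
  + by move=> a /expsum0P ea; apply/expsum0P; rewrite expsum_twist.
  + by rewrite /= /lexp /= Hu (negbTE Hs).
- apply: (Comm_twist (W := fun _ => True) (A := Gamma adj) (r := [:: (u, false)])) => //.
  + by move=> h; split=> [[h_aut [g hg]] | [h_aut [g [_ hg]]]]; split=> //; exists g.
  + by rewrite /= /lexp /= Hu.
- by move=> x /size_M x_M; rewrite twist_id_short; [exact: weq_refl | lia].
- exact: (twist_not_id (M := M) Hu s_moved).
Qed.

End Twist.

Section Wedge.
Variables (T : finType) (e : rel T) (v : T).
Local Notation V := (wedge_vertex v).
Local Notation adjL := (@wedge_adj T e v).

Definition copy2 : 'I_4 := Ordinal (isT : 2 < 4).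
Definition copy3 : 'I_4 := Ordinal (isT : 3 < 4).

Definition swap23 (a : V) : V :=
  if a is Some (i, x) then Some (tperm copy2 copy3 i, x) else None.

Definition copy0 : pred V := fun a => if a is Some (i, _) then i == ord0 else false.

Lemma wedge_adj_sym : symmetric e -> symmetric adjL.
Proof. by move=> e_sym [[i x]|] [[j y]|] //=; rewrite e_sym // eq_sym. Qed.

Lemma swap23K : involutive swap23.
Proof. by case=> [[i x]|] //=; rewrite tpermK. Qed.

Lemma wedge_adj_swap23 a b : adjL (swap23 a) (swap23 b) = adjL a b.
Proof. by case: a => [[i x]|]; case: b => [[j y]|] //=; rewrite (inj_eq perm_inj). Qed.

Lemma swap23_star a b : copy0 a -> a = b \/ adjL a b -> swap23 b = b.
Proof.
case: a => [[i x]|] //= /eqP -> {i}.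
have fix0 : tperm copy2 copy3 ord0 = ord0 by rewrite tpermD.
case=> [<- | ]; first by rewrite /= fix0.
by case: b => [[j y]|] //= /andP [/eqP <- _]; rewrite fix0.
Qed.

End Wedge.

Theorem corollary4p7 (T : finType) (e : rel T) (v w : T) :
  symmetric e -> irreflexive e -> w != v ->
  let adjL := @wedge_adj T e v in
  not_discrete adjL
    (inter (Comm adjL (BB adjL)) (Comm adjL (Gamma adjL))) /\
  not_discrete adjL (Comm adjL (BB adjL)).
Proof.
move=> e_sym _ w_v adjL.
pose w' : {x : T | x != v} := exist _ w w_v.
have moved : swap23 (Some (copy2, w')) != Some (copy2, w') by rewrite /= tpermL.
have twist_witness := Comm_BB_Gamma_not_discrete (wedge_adj_sym e_sym) (@swap23K T v)
  (@wedge_adj_swap23 T e v) (@swap23_star T e v) (u := Some (ord0, w')) _ isT moved.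
split=> F; have [h [BBh [Gh fixes]]] := twist_witness F.
- by exists h; split=> //; split.
- by exists h.
Qed.
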